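(* Let $p$ be a prime, $\zeta=\zeta_{p^2}$ a primitive $p^2$th root of unity, $t=1-\zeta$, $C_{p^2}$ cyclic with generator $c$, and $\omega_{p^2}\colon\mathbb{Z}[\zeta]C_{p^2}\to W^{(0)}:=\prod_{j\in[0,p^2-1]}\mathbb{Z}[\zeta]$, $c\mapsto(\zeta^j)_j$. For $k\in[0,p^2-1]$ let $\xi_k:=\bigl((-1)^kt^k\binom{j}{k}\bigr)_{j\in[0,p^2-1]}$, and let $W^{(1)}$ be the $\mathbb{Z}[\zeta]$-span of $\xi_0,\dots,\xi_{p^2-1}$. Let $\gamma:=\sum_{k\in[1,p-1]}t^{k-1}/k$ and $f(X):=\gamma X^p-\sum_{k\in[1,p-1]}\frac{t^{k-1}}{k}X^k\in\mathbb{Z}_{(p)}[\zeta][X]$. Define \[ W^{(2)}:=\Bigl\{\sum_{k\in[0,p^2-1]}z_k\xi_k\;\Bigm|\;z_k\in\mathbb{Z}[\zeta],\ \bigl(X^if^j(X)\bigr)\bigl[(z_k)_{k\in[0,p^2-1]}\bigr]\equiv0\pmod{t^{j(p-1)}\mathbb{Z}_{(p)}[\zeta]}\ \text{for all }i\in[0,p-1],\ j\in[0,p-1]\Bigr\}. \] Then $W^{(2)}\subseteq W^{(1)}\subseteq W^{(0)}$ and $\omega_{p^2}$ maps $\mathbb{Z}[\zeta]C_{p^2}$ isomorphically onto $W^{(2)}$.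
   Context: For a polynomial $g(X)=\sum_{i\ge0}a_iX^i$ and a tuple $(z_k)_{k\in[0,s]}$, the evaluation is $g[(z_k)_{k\in[0,s]}]:=\sum_{k\in[0,s]}a_kz_k$ (coefficients beyond degree $s$ ignored); $f^j$ is the $j$th power of $f$ in the polynomial ring. $\mathbb{Z}_{(p)}$ is $\mathbb{Z}$ localized at $(p)$. $\binom{j}{k}=0$ for $k>j$. *)

(* Z[zeta] is realised inside the algebraic complex numbers algC. *)
From mathcomp Require Import all_boot all_order all_algebra all_field.
Unset Printing Implicit Defensive.
Import Order.TTheory GRing.Theory Num.Theory.
Local Open Scope ring_scope.

Definition inZz (z x : algC) : Prop :=
  exists (n : nat) (a : nat -> int), x = \sum_(i < n) (a i)%:~R * z ^+ i.

Definition inZpz (p : nat) (z x : algC) : Prop :=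
  exists (s : int) (y : algC), ~~ (p%:Z %| s)%Z /\ inZz z y /\ x = y / s%:~R.

Definition tz (z : algC) : algC := 1 - z.

Definition gammaz (p : nat) (z : algC) : algC :=
  \sum_(1 <= k < p) (tz z) ^+ k.-1 / k%:R.

Definition fpoly (p : nat) (z : algC) : {poly algC} :=
  gammaz p z *: 'X^p - \sum_(1 <= k < p) ((tz z) ^+ k.-1 / k%:R) *: 'X^k.

(* g[(z_k)_{k in [0,n-1]}] = sum_k g_k z_k  (higher coefficients ignored) *)
Definition peval (n : nat) (g : {poly algC}) (zs : 'I_n -> algC) : algC :=
  \sum_(k < n) g`_k * zs k.

Definition xi (p : nat) (z : algC) (k j : 'I_(p ^ 2)) : algC :=
  (-1) ^+ k * (tz z) ^+ k * ('C(j, k))%:R.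

Definition W0 (p : nat) (z : algC) (w : 'I_(p ^ 2) -> algC) : Prop :=
  forall j, inZz z (w j).

Definition W1 (p : nat) (z : algC) (w : 'I_(p ^ 2) -> algC) : Prop :=
  exists zs : 'I_(p ^ 2) -> algC, (forall k, inZz z (zs k)) /\
    forall j, w j = \sum_(k < p ^ 2) zs k * xi p z k j.

Definition W2 (p : nat) (z : algC) (w : 'I_(p ^ 2) -> algC) : Prop :=
  exists zs : 'I_(p ^ 2) -> algC, (forall k, inZz z (zs k)) /\
    (forall i j : nat, (i < p)%N -> (j < p)%N ->
       exists y, inZpz p z y /\
         peval (p ^ 2) ('X^i * (fpoly p z) ^+ j) zs = (tz z) ^+ (j * (p - 1))%N * y) /\
    forall j, w j = \sum_(k < p ^ 2) zs k * xi p z k j.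

(* Elements of the group ring Z[zeta] C_{p^2}: a = sum_i a_i c^i, a_i in Z[zeta] *)
Definition inGR (p : nat) (z : algC) (a : 'I_(p ^ 2) -> algC) : Prop :=
  forall i, inZz z (a i).

Definition grmul (p : nat) (a b : 'I_(p ^ 2) -> algC) (k : 'I_(p ^ 2)) : algC :=
  \sum_(i < p ^ 2) \sum_(i' < p ^ 2 | ((i + i') %% p ^ 2 == k)%N) a i * b i'.

(* omega_{p^2} : c |-> (zeta^j)_j, so sum_i a_i c^i |-> (sum_i a_i zeta^(i j))_j *)
Definition omega (p : nat) (z : algC) (a : 'I_(p ^ 2) -> algC) (j : 'I_(p ^ 2)) : algC :=
  \sum_(i < p ^ 2) a i * z ^+ (i * j)%N.

From mathcomp Require Import all_boot all_order all_algebra all_field.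
From mathcomp Require Import ring.
Import Order.TTheory GRing.Theory Num.Theory.
Local Open Scope ring_scope.

(* Write [t = 1 - z] and [qnat m = 1 + z + ... + z ^+ (m - 1)], so that
   [z ^+ m = 1 - t * qnat m].  Expanding [z ^+ (i * j) = (1 - t * qnat i) ^+ j] binomially gives
   [omega a = \sum_k z_k xi_k] with [z_k = \sum_i a_i (qnat i) ^+ k], the moments of [a] at
   the nodes [qnat i]; evaluating a polynomial [g] of degree [< p ^ 2] on the moments gives
   [\sum_i a_i g(qnat i)].  The polynomial [f] compares truncated logarithms,
   [t f(x) = x ^+ p lambda(t) - lambda(t x)] with [lambda(y) = \sum_(k < p) y ^+ k / k], and
   [p lambda(y) = 1 - (1 - y) ^+ p + (- y) ^+ p] modulo [p ^ 2 y]; together with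
   [(qnat m) ^+ p = 1 + z ^+ p + ... + z ^+ (p (m - 1))] modulo [p] and [p ~ t ^+ (p - 1)]
   this gives [f(qnat m) = 0] modulo [t ^+ (p - 1)], so [omega] maps into [W2].
   Conversely the moments determine [a] through the Vandermonde matrix of the nodes, whose
   determinant is [t ^+ E] times a unit.  The polynomials [X ^+ (d %% p) f ^+ (d %/ p)] are
   triangular with leading coefficients powers of [gamma], which is prime to [t]; the
   congruences defining [W2] say that their values at the nodes, divided by the expected
   power of [t], map [a] into [Z_(p)[z]].  Cramer's rule, followed by cancelling [gamma]
   modulo powers of the prime [t], puts [a] in [Z_(p)[z]]; since the Vandermonde
   determinant divides a power of [p], [a] lies in [Z[z]]. *)

Set Implicit Arguments.
Unset Strict Implicit.
Set Maximal Implicit Insertion.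

Definition subring_prop (R : pzRingType) (P : R -> Prop) :=
  [/\ P 1, forall x y, P x -> P y -> P (x - y)
         & forall x y, P x -> P y -> P (x * y)].

Section SubringProp.
Variables (R : pzRingType) (P : R -> Prop).
Hypothesis P_subring : subring_prop P.

Lemma rprop1 : P 1. Proof. by case: P_subring. Qed.

Lemma rpropB x y : P x -> P y -> P (x - y).
Proof. by case: P_subring => _ PB _; apply: PB. Qed.

Lemma rpropM x y : P x -> P y -> P (x * y).
Proof. by case: P_subring => _ _ PM; apply: PM. Qed.

Lemma rprop0 : P 0.
Proof. by rewrite -(subrr 1); apply: rpropB; apply: rprop1. Qed.

Lemma rpropN x : P x -> P (- x).
Proof. by move=> Px; rewrite -sub0r; apply: rpropB => //; apply: rprop0. Qed.

Lemma rpropD x y : P x -> P y -> P (x + y).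
Proof. by move=> Px Py; rewrite -[y]opprK; apply: rpropB => //; apply: rpropN. Qed.

Lemma rpropX x k : P x -> P (x ^+ k).
Proof.
move=> Px; elim: k => [|k IHk]; first by rewrite expr0; apply: rprop1.
by rewrite exprS; apply: rpropM.
Qed.

Lemma rprop_sum (I : Type) (r : seq I) (Q : pred I) (F : I -> R) :
  (forall i, Q i -> P (F i)) -> P (\sum_(i <- r | Q i) F i).
Proof. by move=> PF; apply: (big_ind P) => //; [apply: rprop0 | exact: @rpropD]. Qed.

Lemma rprop_prod (I : Type) (r : seq I) (Q : pred I) (F : I -> R) :
  (forall i, Q i -> P (F i)) -> P (\prod_(i <- r | Q i) F i).
Proof. by move=> PF; apply: (big_ind P) => //; [apply: rprop1 | exact: @rpropM]. Qed.

Lemma rprop_nat k : P k%:R.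
Proof.
elim: k => [|k IHk]; first exact: rprop0.
by rewrite mulrS; apply: rpropD => //; apply: rprop1.
Qed.

Lemma rprop_int (k : int) : P k%:~R.
Proof.
case: k => k; first exact: rprop_nat.
by rewrite NegzE mulrNz; apply: rpropN; apply: rprop_nat.
Qed.

Lemma rprop_det m (M : 'M[R]_m) : (forall i j, P (M i j)) -> P (\det M).
Proof.
move=> PM; apply: rprop_sum => s _; apply: rpropM; first exact: rpropX (rpropN rprop1).
by apply: rprop_prod.
Qed.

Lemma rprop_adj m (M : 'M[R]_m) : (forall i j, P (M i j)) -> forall i j, P (\adj M i j).
Proof.
move=> PM i j; rewrite mxE /cofactor; apply: rpropM; first exact: rpropX (rpropN rprop1).
by apply: rprop_det => k l; rewrite !mxE; apply: PM.
Qed.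

End SubringProp.

Section ComSubringProp.
Variables (R : comPzRingType) (P : R -> Prop).
Hypothesis P_subring : subring_prop P.

Lemma rprop_det_mul_col m (M : 'M[R]_m) (a : 'cV[R]_m) :
  (forall i j, P (M i j)) -> (forall i, P ((M *m a) i 0)) ->
  forall i, P (\det M * a i 0).
Proof.
move=> PM PMa i.
have adjMa : \adj M *m (M *m a) = \det M *: a.
  by rewrite mulmxA mul_adj_mx mul_scalar_mx.
have := congr1 (fun B : 'cV_m => B i 0) adjMa; rewrite /= [RHS]mxE => <-.
rewrite mxE; apply: rprop_sum => // k _; apply: rpropM => //.
exact: rprop_adj.
Qed.

Lemma rprop_exprD_prime p x y : prime p -> P x -> P y ->
  exists2 r, P r & (x + y) ^+ p = x ^+ p + y ^+ p + p%:R * r.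
Proof.
move=> p_pr Px Py.
exists (\sum_(1 <= i < p) x ^+ (p - i) * y ^+ i *+ ('C(p, i) %/ p)).
  apply: rprop_sum => // i _; rewrite -mulr_natr.
  apply: (rpropM P_subring); last exact: (rprop_nat P_subring).
  by apply: (rpropM P_subring); apply: (rpropX P_subring).
rewrite exprDn -(big_mkord xpredT (fun i => x ^+ (p - i) * y ^+ i *+ 'C(p, i))).
have p_gt0 := prime_gt0 p_pr; rewrite big_ltn // big_nat_recr //=.
rewrite subnn subn0 !expr0 mulr1 mul1r binn bin0 !mulr1n mulr_sumr addrA [RHS]addrAC.
congr (_ + _); congr (_ + _); apply: eq_big_nat => i /andP[i_gt0 i_lt_p].
by rewrite mulr_natl -mulrnA divnK // prime_dvd_bin // i_gt0.
Qed.

End ComSubringProp.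

Lemma one_subX_geom (R : pzRingType) (x : R) m :
  1 - x ^+ m = (1 - x) * \sum_(i < m) x ^+ i.
Proof. by rewrite -opprB subrX1 -mulNr opprB. Qed.

Lemma prim_root_neq1 (R : nzRingType) (w : R) k :
  (1 < k)%N -> k.-primitive_root w -> w != 1.
Proof. by move=> k_gt1 wk; rewrite -[w]expr1 -(prim_order_dvd wk) dvdn1 neq_ltn k_gt1 orbT. Qed.

Lemma prod_one_sub_prim_root (F : fieldType) (w : F) k :
  (1 < k)%N -> k.-primitive_root w -> \prod_(1 <= i < k) (1 - w ^+ i) = k%:R.
Proof.
move=> k_gt1 wk; have := factor_Xn_sub_1 wk.
rewrite big_ltn ?(ltn_trans _ k_gt1) // expr0 subrX1 -polyC1.
move/(mulfI (negbT (polyXsubC_eq0 1)))/(congr1 (horner^~ 1)).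
rewrite horner_prod horner_sum => prod_eq.
transitivity (\prod_(1 <= i < k) ('X - (w ^+ i)%:P).[1]).
  by apply: eq_bigr => i _; rewrite hornerXsubC.
rewrite prod_eq (eq_bigr (fun _ => 1)) => [|i _]; last by rewrite hornerXn expr1n.
by rewrite sumr_const card_ord.
Qed.

Lemma prod_one_sub_mul_prim_root (F : fieldType) (w x : F) m :
  m.-primitive_root w -> \prod_(k < m) (1 - x * w ^+ k) = 1 - x ^+ m.
Proof.
move=> wm; have m_gt0 := prim_order_gt0 wm.
have [-> | x_neq0] := eqVneq x 0.
  by rewrite expr0n gtn_eqF // subr0 big1 // => k _; rewrite mul0r subr0.
have := congr1 (horner^~ x^-1) (factor_Xn_sub_1 wm).
rewrite horner_prod big_mkord !hornerE => prod_eq.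
transitivity (\prod_(k < m) (x * (x^-1 - w ^+ k))).
  by apply: eq_bigr => k _; rewrite mulrBr mulfV.
rewrite big_split prodr_const card_ord /=.
under [X in _ * X]eq_bigr do rewrite -hornerXsubC.
by rewrite prod_eq mulrBr mulr1 -exprMn mulfV // expr1n.
Qed.

Lemma bin_pred_prime_mod p j : prime p -> (j < p)%N ->
  (p%:Z %| 'C(p.-1, j)%:Z - (-1) ^+ j)%Z.
Proof.
move=> p_pr; elim: j => [|j IHj] j_lt_p; first by rewrite bin0 expr0 subrr dvdz0.
have binSp : 'C(p, j.+1) = ('C(p.-1, j.+1) + 'C(p.-1, j))%N by rewrite -binS prednK ?prime_gt0.
have -> : 'C(p.-1, j.+1)%:Z - (-1) ^+ j.+1 = 'C(p, j.+1)%:Z - ('C(p.-1, j)%:Z - (-1) ^+ j).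
  by rewrite binSp PoszD exprS; ring.
apply: rpredB; last exact/IHj/ltnW.
by rewrite dvdzE /= prime_dvd_bin.
Qed.

Definition tlog_coef p k : int := ((1 + (-1) ^+ k * 'C(p.-1, k.-1)%:Z) %/ p%:Z)%Z.

Lemma tlog_coefE p k : prime p -> (0 < k < p)%N ->
  tlog_coef p k * p%:Z = 1 + (-1) ^+ k * 'C(p.-1, k.-1)%:Z.
Proof.
move=> p_pr /andP[k_gt0 k_lt_p]; apply: divzK.
case: k k_gt0 k_lt_p => // k _ k_lt_p.
have -> : 1 + (-1) ^+ k.+1 * 'C(p.-1, k)%:Z = - (-1) ^+ k * ('C(p.-1, k)%:Z - (-1) ^+ k).
  have sqr1 : (-1) ^+ k * (-1) ^+ k = 1 :> int by rewrite -exprMn mulrNN mulr1 expr1n.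
  by rewrite exprS mulrBr !mulNr sqr1; ring.
exact/dvdz_mull/bin_pred_prime_mod/ltnW.
Qed.

Section TruncatedLog.
Variables (F : numFieldType) (p : nat).

(* [tlog y] is [- log (1 - y)] truncated below degree [p]. *)
Definition tlog (y : F) := \sum_(1 <= k < p) y ^+ k / k%:R.
Definition tlog_err (y : F) := \sum_(1 <= k < p) y ^+ k.-1 * (tlog_coef p k)%:~R / k%:R.

Hypothesis p_pr : prime p.

Lemma tlog_binomial y :
  p%:R * tlog y = 1 - (1 - y) ^+ p + (- y) ^+ p + p%:R ^+ 2 * y * tlog_err y.
Proof.
rewrite exprBn -(big_mkord xpredT (fun i => (-1) ^+ i * 1 ^+ (p - i) * y ^+ i *+ 'C(p, i))).
have p_gt0 := prime_gt0 p_pr; rewrite big_ltn // big_nat_recr //=.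
rewrite subnn !expr0 !expr1n !mulr1 binn bin0 !mulr1n exprNn.
set S := \sum_(1 <= i < p) _.
transitivity (- S + p%:R ^+ 2 * y * tlog_err y).
  2: by rewrite [(- y) ^+ p]exprNn expr1n; ring.
rewrite /tlog /tlog_err mulr_sumr [p%:R ^+ 2 * y * _]mulr_sumr /S -sumrN -big_split /=.
apply: eq_big_nat => k /andP[k_gt0 k_lt_p].
have k_neq0 : k%:R != 0 :> F by rewrite pnatr_eq0 -lt0n.
have p_neq0 : p%:R != 0 :> F by rewrite pnatr_eq0 -lt0n prime_gt0.
have binE : 'C(p, k)%:R = p%:R * 'C(p.-1, k.-1)%:R / k%:R :> F.
  have := mul_bin_diag p k.-1; rewrite prednK // => /(congr1 (fun m => m%:R : F)).
  by rewrite !natrM => ->; field.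
have coefE : (tlog_coef p k)%:~R = (1 + (-1) ^+ k * 'C(p.-1, k.-1)%:R) / p%:R :> F.
  have := congr1 (intr : int -> F) (tlog_coefE p_pr (k:=k) (introT andP (conj k_gt0 k_lt_p))).
  by rewrite intrM intrD intrM rmorphXn rmorphN /= => <-; field.
rewrite expr1n mulr1 -[_ *+ 'C(p, k)]mulr_natr binE coefE.
case: k k_gt0 k_lt_p k_neq0 {binE coefE} => // k _ _ k_neq0 /=.
by rewrite exprS; field; rewrite addrC natr1 k_neq0 p_neq0.
Qed.

End TruncatedLog.

Lemma sum_dvdn_subn p j : (0 < p)%N -> (\sum_(i < j) (p %| j - i) = j %/ p)%N.
Proof.
move=> p_gt0; elim: j => [|j IHj]; first by rewrite big_ord0 div0n.
by rewrite big_ord_recl /= subn0 divnS // -IHj.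
Qed.

Lemma peval_moments N (q : {poly algC}) (c x : 'I_N -> algC) : (size q <= N)%N ->
  peval N q (fun k => \sum_(m < N) c m * x m ^+ k) = \sum_(m < N) c m * q.[x m].
Proof.
move=> size_q; rewrite /peval.
under eq_bigr => k _ do rewrite mulr_sumr.
rewrite exchange_big /=; apply: eq_bigr => m _.
rewrite (horner_coef_wide _ size_q) mulr_sumr; apply: eq_bigr => k _; ring.
Qed.
Section IntegerCombinations.
Variable z : algC.

Lemma inZz_horner x : inZz z x <-> exists P : {poly int}, x = (map_poly intr P).[z].
Proof.
split.
- case=> n [a ->]; exists (\sum_(i < n) (a i)%:P * 'X^i).
  rewrite rmorph_sum horner_sum; apply: eq_bigr => i _.
  by rewrite rmorphM /= map_polyC map_polyXn hornerCM hornerXn.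
- case=> P ->; exists (size P), (fun i => P`_i).
  rewrite (@horner_coef_wide _ (size P)); last by rewrite size_map_inj_poly //; apply: intr_inj.
  by apply: eq_bigr => i _; rewrite coef_map.
Qed.

Lemma inZz_subring : subring_prop (inZz z).
Proof.
split.
- by apply/inZz_horner; exists 1; rewrite rmorph1 hornerC.
- move=> _ _ /inZz_horner[P ->] /inZz_horner[Q ->]; apply/inZz_horner.
  by exists (P - Q); rewrite rmorphB hornerD hornerN.
- move=> _ _ /inZz_horner[P ->] /inZz_horner[Q ->]; apply/inZz_horner.
  by exists (P * Q); rewrite rmorphM hornerM.
Qed.

Lemma inZz_gen : inZz z z.
Proof. by apply/inZz_horner; exists 'X; rewrite map_polyX hornerX. Qed.

End IntegerCombinations.

Local Notation inZz0 := (rprop0 (inZz_subring _)).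
Local Notation inZz1 := (rprop1 (inZz_subring _)).
Local Notation inZzB := (rpropB (inZz_subring _)).
Local Notation inZzN := (rpropN (inZz_subring _)).
Local Notation inZzD := (rpropD (inZz_subring _)).
Local Notation inZzM := (rpropM (inZz_subring _)).
Local Notation inZzX := (rpropX (inZz_subring _)).
Local Notation inZz_sum := (rprop_sum (inZz_subring _)).
Local Notation inZz_prod := (rprop_prod (inZz_subring _)).
Local Notation inZz_nat := (rprop_nat (inZz_subring _)).
Local Notation inZz_int := (rprop_int (inZz_subring _)).

Definition Zz_unit (z x : algC) := exists2 y, inZz z y & x * y = 1.

Section Units.
Variable z : algC.

Lemma Zz_unitM x y : Zz_unit z x -> Zz_unit z y -> Zz_unit z (x * y).
Proof.
case=> a Ra xa [b Rb yb]; exists (a * b); first exact: inZzM Ra Rb.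
by rewrite mulrACA xa yb mulr1.
Qed.

Lemma Zz_unit_prod (I : Type) (r : seq I) (P : pred I) (F : I -> algC) :
  (forall i, P i -> Zz_unit z (F i)) -> Zz_unit z (\prod_(i <- r | P i) F i).
Proof.
move=> PF; apply: (big_ind (Zz_unit z)) => //; last exact: @Zz_unitM.
by exists 1; [apply: inZz1 | rewrite mulr1].
Qed.

(* The inverse of [1 + w + ... + w ^+ (m - 1)] is the analogous sum for [w ^+ m], of
   length [m^-1 mod k]. *)
Lemma Zz_unit_geom_prim_root (w : algC) k m : (1 < k)%N -> k.-primitive_root w ->
  inZz z w -> coprime m k -> Zz_unit z (\sum_(i < m) w ^+ i).
Proof.
move=> k_gt1 wk Rw co_mk.
have m_gt0 : (0 < m)%N.
  by case: m co_mk => //; rewrite /coprime gcd0n => /eqP k1; rewrite k1 in k_gt1.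
case: (egcdnP k m_gt0) => a b mab _; rewrite (eqP co_mk) in mab.
exists (\sum_(i < a) (w ^+ m) ^+ i); first by apply: inZz_sum => i _; apply/inZzX/inZzX.
have w_neq1 : 1 - w != 0 by rewrite subr_eq0 eq_sym (prim_root_neq1 k_gt1 wk).
apply: (mulfI w_neq1); rewrite mulr1 mulrA -!one_subX_geom -exprM mulnC.
by rewrite -(prim_expr_mod wk) mab modnMDl modn_small // expr1.
Qed.

End Units.

Section CyclotomicPSquare.
Variables (p : nat) (z : algC).
Hypothesis p_pr : prime p.
Local Notation Rp := (inZpz p z).
Local Notation t := (tz z).

Lemma ndvdzM (s1 s2 : int) :
  ~~ (p%:Z %| s1)%Z -> ~~ (p%:Z %| s2)%Z -> ~~ (p%:Z %| s1 * s2)%Z.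
Proof. by rewrite !dvdzE abszM Euclid_dvdM // negb_or => -> ->. Qed.

Lemma ndvdz_intr_neq0 (s : int) : ~~ (p%:Z %| s)%Z -> s%:~R != 0 :> algC.
Proof. by rewrite intr_eq0; apply: contra => /eqP ->; rewrite dvdz0. Qed.

Lemma ndvdz1 : ~~ (p%:Z %| 1)%Z.
Proof. by rewrite dvdzE /= Euclid_dvd1. Qed.

Lemma inZz_inZpz x : inZz z x -> Rp x.
Proof. by move=> Rx; exists 1, x; split; [exact: ndvdz1 | rewrite divr1]. Qed.

Lemma inZpz_subring : subring_prop Rp.
Proof.
split; first by apply/inZz_inZpz/inZz1.
- move=> _ _ [s1 [y1 [n1 [R1 ->]]]] [s2 [y2 [n2 [R2 ->]]]].
  exists (s1 * s2), (y1 * s2%:~R - y2 * s1%:~R); split; first exact: ndvdzM.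
  split; first exact: inZzB (inZzM R1 (inZz_int _)) (inZzM R2 (inZz_int _)).
  have := ndvdz_intr_neq0 n1; have := ndvdz_intr_neq0 n2.
  by rewrite intrM => s2_neq0 s1_neq0; field; rewrite s1_neq0 s2_neq0.
- move=> _ _ [s1 [y1 [n1 [R1 ->]]]] [s2 [y2 [n2 [R2 ->]]]].
  exists (s1 * s2), (y1 * y2); split; first exact: ndvdzM.
  split; first exact: inZzM R1 R2.
  have := ndvdz_intr_neq0 n1; have := ndvdz_intr_neq0 n2.
  by rewrite intrM => s2_neq0 s1_neq0; field; rewrite s1_neq0 s2_neq0.
Qed.

Local Notation inZpz1 := (rprop1 inZpz_subring).
Local Notation inZpzB := (rpropB inZpz_subring).
Local Notation inZpzD := (rpropD inZpz_subring).
Local Notation inZpzM := (rpropM inZpz_subring).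
Local Notation inZpzX := (rpropX inZpz_subring).
Local Notation inZpz_sum := (rprop_sum inZpz_subring).
Local Notation inZpz_prod := (rprop_prod inZpz_subring).

Lemma inZpz_divz x (s : int) : Rp x -> ~~ (p%:Z %| s)%Z -> Rp (x / s%:~R).
Proof.
case=> s1 [y1 [n1 [R1 ->]]] ns; exists (s1 * s), y1; split; first exact: ndvdzM.
by split => //; rewrite intrM invfM mulrA.
Qed.

Lemma inZpz_invn k : (0 < k < p)%N -> Rp k%:R^-1.
Proof.
case/andP=> k_gt0 k_lt_p; rewrite -[_^-1]mul1r -[k%:R]/((k%:Z)%:~R : algC).
apply: inZpz_divz; first exact: inZpz1.
by rewrite dvdzE /=; apply/negP => /(dvdn_leq k_gt0); rewrite leqNgt k_lt_p.
Qed.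

Lemma inZz_t : inZz z t.
Proof. exact: inZzB inZz1 (inZz_gen z). Qed.

Definition tdvd (e : nat) (x : algC) := exists y, Rp y /\ x = t ^+ e * y.

Lemma tdvd0 e : tdvd e 0.
Proof. by exists 0; split; [apply: rprop0 inZpz_subring | rewrite mulr0]. Qed.

Lemma tdvdB e x y : tdvd e x -> tdvd e y -> tdvd e (x - y).
Proof.
by case=> a [Ra ->] [b [Rb ->]]; exists (a - b); split; [apply: inZpzB | rewrite mulrBr].
Qed.

Lemma tdvdD e x y : tdvd e x -> tdvd e y -> tdvd e (x + y).
Proof.
by case=> a [Ra ->] [b [Rb ->]]; exists (a + b); split; [apply: inZpzD | rewrite mulrDr].
Qed.

Lemma tdvd_sum e (I : Type) (r : seq I) (P : pred I) (F : I -> algC) :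
  (forall i, P i -> tdvd e (F i)) -> tdvd e (\sum_(i <- r | P i) F i).
Proof. by move=> PF; apply: (big_ind (tdvd e)) => //; [apply: tdvd0 | exact: @tdvdD]. Qed.

Lemma tdvdMl e c x : Rp c -> tdvd e x -> tdvd e (c * x).
Proof. by move=> Rc [a [Ra ->]]; exists (c * a); split; [apply: inZpzM | rewrite mulrCA]. Qed.

Lemma tdvdM e1 e2 x y : tdvd e1 x -> tdvd e2 y -> tdvd (e1 + e2) (x * y).
Proof.
case=> a [Ra ->] [b [Rb ->]]; exists (a * b); split; first exact: inZpzM Ra Rb.
by rewrite exprD; ring.
Qed.

Lemma tdvdX e x k : tdvd e x -> tdvd (e * k) (x ^+ k).
Proof.
move=> ex; elim: k => [|k IHk].
  by exists 1; rewrite muln0 !expr0 mulr1; split; first exact: inZpz1.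
by rewrite mulnS exprS; apply: tdvdM.
Qed.

Lemma tdvdW e e' x : (e' <= e)%N -> tdvd e x -> tdvd e' x.
Proof.
move=> le_e'e [a [Ra ->]]; exists (t ^+ (e - e') * a).
split; last by rewrite mulrA -exprD subnKC.
by apply: inZpzM Ra; apply/inZpzX/inZz_inZpz/inZz_t.
Qed.

Lemma tdvd0E x : tdvd 0 x <-> Rp x.
Proof.
by split=> [[y [Ry ->]] | Rx]; [rewrite expr0 mul1r | exists x; rewrite expr0 mul1r].
Qed.

Hypothesis z_prim : (p ^ 2).-primitive_root z.
Local Notation n := (p ^ 2)%N.

Lemma n_gt1 : (1 < n)%N.
Proof. by rewrite -[1%N](exp1n 2) ltn_exp2r // prime_gt1. Qed.

Lemma t_neq0 : t != 0.
Proof. by rewrite subr_eq0 eq_sym (prim_root_neq1 n_gt1 z_prim). Qed.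

Definition qnat m := \sum_(i < m) z ^+ i.

Lemma t_qnat m : t * qnat m = 1 - z ^+ m.
Proof. by rewrite one_subX_geom. Qed.

Lemma inZz_qnat m : inZz z (qnat m).
Proof. by apply: inZz_sum => i _; apply/inZzX/inZz_gen. Qed.

Lemma Zz_unit_zX k : Zz_unit z (z ^+ k).
Proof.
exists (z ^+ (n - k %% n)); first exact/inZzX/inZz_gen.
rewrite -(prim_expr_mod z_prim k) -exprD subnKC ?prim_expr_order //.
by rewrite ltnW // ltn_mod (ltn_trans _ n_gt1).
Qed.

Lemma prim_root_zp : p.-primitive_root (z ^+ p).
Proof.
have := dvdn_prim_root z_prim (dvdn_exp2l p (isT : (1 <= 2)%N)).
by rewrite expn1 expnS expn1 mulKn // prime_gt0.
Qed.

Lemma one_sub_zp : 1 - z ^+ p = t ^+ p * \prod_(k < p) qnat (1 + p * k).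
Proof.
rewrite -(prod_one_sub_mul_prim_root z prim_root_zp).
rewrite (eq_bigr (fun k : 'I_p => t * qnat (1 + p * k))) => [|k _].
  by rewrite big_split prodr_const card_ord.
by rewrite t_qnat add1n exprS exprM.
Qed.

Lemma Zz_unit_qnat m : ~~ (p %| m)%N -> Zz_unit z (qnat m).
Proof.
move=> p_ndvd_m; apply: (Zz_unit_geom_prim_root n_gt1 z_prim (inZz_gen z)).
by rewrite coprime_sym coprimeXl // prime_coprime.
Qed.

Lemma qnat_tval m : (0 < m < n)%N ->
  exists2 v, Zz_unit z v & qnat m = t ^+ ((p - 1) * (p %| m)) * v.
Proof.
case/andP=> m_gt0 m_lt_n.
have [p_dvd_m | p_ndvd_m] := boolP (p %| m)%N; last first.
  by exists (qnat m); [apply: Zz_unit_qnat | rewrite muln0 expr0 mul1r].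
rewrite muln1; case/dvdnP: p_dvd_m => m' def_m.
have m'_gt0 : (0 < m')%N by move: m_gt0; rewrite def_m muln_gt0 => /andP[].
have m'_lt_p : (m' < p)%N.
  by move: m_lt_n; rewrite def_m expnS expn1 mulnC ltn_pmul2l ?prime_gt0.
pose S := \sum_(i < m') (z ^+ p) ^+ i.
have S_unit : Zz_unit z S.
  apply: (Zz_unit_geom_prim_root (prime_gt1 p_pr) prim_root_zp); first exact/inZzX/inZz_gen.
  rewrite coprime_sym prime_coprime //.
  by apply/negP => /(dvdn_leq m'_gt0); rewrite leqNgt m'_lt_p.
exists ((\prod_(k < p) qnat (1 + p * k)) * S).
  apply: Zz_unitM S_unit; apply: Zz_unit_prod => k _; apply: Zz_unit_qnat.
  by rewrite dvdn_addl ?dvdn_mulr // Euclid_dvd1.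
have tS : t * qnat m = (1 - z ^+ p) * S by rewrite t_qnat def_m mulnC exprM one_subX_geom.
have tp : t ^+ p = t * t ^+ (p - 1) by rewrite -exprS subn1 prednK ?prime_gt0.
by apply: (mulfI t_neq0); rewrite tS one_sub_zp tp; ring.
Qed.

Lemma natp_t : p%:R = t ^+ (p - 1) * \prod_(1 <= i < p) qnat (p * i).
Proof.
rewrite -(prod_one_sub_prim_root (prime_gt1 p_pr) prim_root_zp).
rewrite -(prodr_const_nat 1 p t) -big_split /=.
by apply: eq_bigr => i _; rewrite t_qnat exprM.
Qed.

Lemma t_dvd_p : exists2 c, inZz z c & p%:R = t * c.
Proof.
exists (t ^+ (p - 2) * \prod_(1 <= i < p) qnat (p * i)).
  by apply: inZzM; [apply/inZzX/inZz_t | apply: inZz_prod => i _; apply: inZz_qnat].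
by rewrite natp_t mulrA -exprS -subSn ?prime_gt1.
Qed.

Lemma inZz_Aint x : inZz z x -> x \in Aint.
Proof.
case=> N [a ->]; apply: rpred_sum => i _; apply: rpredM; first exact: Aint_int.
exact/rpredX/(Aint_prim_root z_prim).
Qed.

(* Otherwise [p], a product of [t] and of the [qnat (p * i)], would be a unit of the
   algebraic integers. *)
Lemma t_not_unit : ~ Zz_unit z t.
Proof.
case=> r Rr tr.
have tX_unit k : Zz_unit z (t ^+ k).
  by exists (r ^+ k); [apply: inZzX | rewrite -exprMn tr expr1n].
have qnat_unit m : (0 < m < n)%N -> Zz_unit z (qnat m).
  by case/qnat_tval=> v v_unit ->; apply: Zz_unitM.
have [y Ry py] : Zz_unit z p%:R.
  rewrite natp_t; apply: Zz_unitM => //; rewrite big_nat.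
  apply: Zz_unit_prod => i /andP[i_gt0 i_lt_p]; apply: qnat_unit.
  by rewrite muln_gt0 prime_gt0 // i_gt0 expnS expn1 ltn_pmul2l ?prime_gt0.
have y_Crat : y \in Crat.
  have p_neq0 : p%:R != 0 :> algC by rewrite pnatr_eq0 -lt0n prime_gt0.
  have -> : y = p%:R^-1 by apply: (mulfI p_neq0); rewrite py divff.
  by rewrite rpredV rpred_nat.
have /intrP[m def_y] := Cint_rat_Aint y_Crat (inZz_Aint Ry).
apply: (negP ndvdz1); apply/dvdzP; exists m; apply: (@intr_inj algC).
by rewrite intrM -def_y mulrC py.
Qed.

Lemma inZz_residue x : inZz z x -> exists k : int, exists2 y, inZz z y & x - k%:~R = t * y.
Proof.
case=> N [a ->]; exists (\sum_(i < N) a i), (- \sum_(i < N) (a i)%:~R * qnat i).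
  by apply/inZzN/inZz_sum => i _; apply: inZzM (inZz_qnat i); apply: inZz_int.
rewrite raddf_sum -sumrB mulrN mulr_sumr -sumrN; apply: eq_bigr => i _.
by rewrite mulrCA t_qnat; ring.
Qed.

Lemma ndvdz_Bezout (s : int) k : ~~ (p%:Z %| s)%Z ->
  exists a b : int, a%:~R * s%:~R + b%:~R * p%:R ^+ k = 1 :> algC.
Proof.
move=> p_ndvd_s; have /coprimezP[[a b] /= ab1] : coprimez s (p%:Z ^+ k).
  by apply: coprimezXr; rewrite coprimezE /= coprime_sym prime_coprime // -dvdzE.
by exists a, b; rewrite -[p%:R]/((p%:Z)%:~R : algC) -rmorphXn -!intrM -intrD ab1.
Qed.

Lemma tdvd1_intr (k : int) : tdvd 1 k%:~R -> (p%:Z %| k)%Z.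
Proof.
case=> _ [[s [y [p_ndvd_s [Ry ->]]]] def_k]; apply/negPn/negP => p_ndvd_k.
have [a [b ab1]] := ndvdz_Bezout 1 (ndvdzM p_ndvd_k p_ndvd_s).
have [c Rc pc] := t_dvd_p.
apply: t_not_unit; exists (a%:~R * y + b%:~R * c).
  by apply: inZzD; apply: inZzM => //; apply: inZz_int.
have ks : k%:~R * s%:~R = t * y.
  by rewrite def_k expr1; field; apply: ndvdz_intr_neq0.
transitivity (a%:~R * (k * s)%:~R + b%:~R * p%:R ^+ 1 : algC); last exact: ab1.
by rewrite intrM ks expr1 pc; ring.
Qed.

Lemma dvdz_tdvd1 (k : int) : (p%:Z %| k)%Z -> tdvd 1 k%:~R.
Proof.
case/dvdzP=> q ->; have [c Rc pc] := t_dvd_p.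
exists (q%:~R * c); split; first by apply/inZz_inZpz/inZzM => //; apply: inZz_int.
by rewrite intrM -[(p%:Z)%:~R]/(p%:R : algC) pc expr1; ring.
Qed.

Lemma inZpz_residue x : Rp x -> exists k : int, tdvd 1 (x - k%:~R).
Proof.
case=> s [y [p_ndvd_s [Ry ->]]].
have [k [y' Ry' def_y]] := inZz_residue Ry.
have [a [b ab1]] := ndvdz_Bezout 1 p_ndvd_s.
have [c Rc pc] := t_dvd_p.
have s_neq0 := ndvdz_intr_neq0 p_ndvd_s.
exists (k * a), ((y' + k%:~R * b%:~R * c) / s%:~R); split.
  apply: inZpz_divz p_ndvd_s; apply: inZz_inZpz.
  by apply: inZzD Ry' _; apply: inZzM Rc; apply: inZzM; apply: inZz_int.
have as1 : a%:~R * s%:~R = 1 - b%:~R * (t * c).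
  by apply/eqP; rewrite -pc -(expr1 (p%:R : algC)) eq_sym subr_eq ab1.
have ka : k%:~R * a%:~R = k%:~R * (1 - b%:~R * (t * c)) / s%:~R.
  by rewrite -as1; field.
have -> : y = t * y' + k%:~R by rewrite -def_y; ring.
by rewrite intrM ka expr1; field.
Qed.

(* [t] is prime in [Z_(p)[z]], as every element is an integer modulo [t]. *)
Lemma tdvd1_mul x y : Rp x -> Rp y -> tdvd 1 (x * y) -> tdvd 1 x \/ tdvd 1 y.
Proof.
move=> Rx Ry dxy.
have [k1 d1] := inZpz_residue Rx; have [k2 d2] := inZpz_residue Ry.
have : (p%:Z %| k1 * k2)%Z.
  apply: tdvd1_intr.
  have -> : (k1 * k2)%:~R = x * y - x * (y - k2%:~R) - k2%:~R * (x - k1%:~R) :> algC.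
    by rewrite intrM; ring.
  by apply: tdvdB (tdvdB dxy (tdvdMl Rx d2)) (tdvdMl _ d1); apply/inZz_inZpz/inZz_int.
rewrite dvdzE abszM Euclid_dvdM // -!dvdzE => /orP[/dvdz_tdvd1 dk | /dvdz_tdvd1 dk].
  by left; rewrite -(subrK k1%:~R x); apply: tdvdD.
by right; rewrite -(subrK k2%:~R y); apply: tdvdD.
Qed.

Lemma not_tdvd1_1 : ~ tdvd 1 1.
Proof. by move/(@tdvd1_intr 1); apply/negP: ndvdz1. Qed.

Lemma not_tdvd1_X x k : Rp x -> ~ tdvd 1 x -> ~ tdvd 1 (x ^+ k).
Proof.
move=> Rx ndx; elim: k => [|k IHk]; first by rewrite expr0; apply: not_tdvd1_1.
by rewrite exprS => /(tdvd1_mul Rx (inZpzX k Rx)) [].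
Qed.

Lemma tdvd_cancel x : Rp x -> ~ tdvd 1 x ->
  forall e y, Rp y -> tdvd e (x * y) -> tdvd e y.
Proof.
move=> Rx ndx; elim=> [|e IHe] y Ry dxy; first exact/tdvd0E.
have [//|[y1 [Ry1 def_y]]] := tdvd1_mul Rx Ry (tdvdW (isT : (1 <= e.+1)%N) dxy).
move: dxy; rewrite def_y expr1 => -[v [Rv xtv]].
have [v' [Rv' ->]] : tdvd e y1.
  apply: IHe Ry1 _; exists v; split => //; apply: (mulfI t_neq0).
  by rewrite mulrCA xtv exprS mulrA.
by exists v'; rewrite mulrA -exprS.
Qed.

Local Notation zp := (z ^+ p).
Local Notation f := (fpoly p z).
Local Notation gamma := (gammaz p z).

Lemma inZpz_tlog_err y : inZz z y -> Rp (tlog_err p y).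
Proof.
move=> Ry; rewrite /tlog_err big_seq; apply: inZpz_sum => k.
rewrite mem_index_iota => /andP[k_gt0 k_lt_p].
apply: inZpzM; last by apply: inZpz_invn; rewrite k_lt_p (leq_trans _ k_gt0).
by apply/inZz_inZpz/inZzM; [apply: inZzX | apply: inZz_int].
Qed.

Lemma qnat_expp m : exists2 r, inZz z r & qnat m ^+ p = \sum_(i < m) zp ^+ i + p%:R * r.
Proof.
elim: m => [|m [r Rr qp]].
  exists 0; first exact: inZz0.
  by rewrite /qnat !big_ord0 expr0n gtn_eqF ?prime_gt0 // mulr0 addr0.
have [r' Rr' qp'] :=
  rprop_exprD_prime (inZz_subring z) p_pr (inZz_qnat m) (inZzX m (inZz_gen z)).
exists (r + r'); first exact: inZzD Rr Rr'.
by rewrite /qnat big_ord_recr /= -/(qnat m) qp' qp big_ord_recr /= -!exprM mulnC; ring.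
Qed.

Lemma t_horner_f x : t * f.[x] = x ^+ p * tlog p t - tlog p (t * x).
Proof.
have t_gamma : t * gamma = tlog p t.
  rewrite /gammaz mulr_sumr; apply: eq_big_nat => k /andP[k_gt0 _].
  by rewrite mulrA -exprS prednK.
rewrite /fpoly hornerD hornerN hornerZ hornerXn horner_sum mulrBr mulrA t_gamma mulrC.
congr (_ - _); rewrite mulr_sumr; apply: eq_big_nat => k /andP[k_gt0 _].
have tk : t ^+ k = t * t ^+ k.-1 by rewrite -exprS prednK.
by rewrite hornerZ hornerXn exprMn tk; ring.
Qed.

(* From [tlog_binomial] at [t] and at [t * qnat m] (note [1 - t * qnat m = z ^+ m]), the
   leading terms combine into [(qnat m) ^+ p - \sum_(i < m) zp ^+ i], a multiple of [p]. *)
Lemma t_horner_f_qnat m : exists r, exists2 X, inZz z r /\ Rp X &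
  t * f.[qnat m] = (1 - zp) * r + p%:R * t * X.
Proof.
have [r Rr qp] := qnat_expp m; set S := \sum_(i < m) zp ^+ i in qp.
have L1 := tlog_binomial p_pr t; have L2 := tlog_binomial p_pr (t * qnat m).
have zt : 1 - t = z by rewrite /tz subKr.
have ztq : 1 - t * qnat m = z ^+ m by rewrite t_qnat subKr.
have zmp : (z ^+ m) ^+ p = 1 - (1 - zp) * S by rewrite -one_subX_geom -!exprM mulnC subKr.
rewrite zt in L1; rewrite ztq zmp -[- (t * qnat m)]mulNr exprMn qp in L2.
exists r, ((S + p%:R * r) * tlog_err p t - qnat m * tlog_err p (t * qnat m)).
  split=> //; apply: inZpzB; apply: inZpzM.
  - apply: inZz_inZpz; apply: inZzD; last by apply: inZzM Rr; apply: inZz_nat.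
    by apply: inZz_sum => i _; apply/inZzX/inZzX/inZz_gen.
  - exact/inZpz_tlog_err/inZz_t.
  - exact/inZz_inZpz/inZz_qnat.
  - exact/inZpz_tlog_err/inZzM/inZz_qnat/inZz_t.
have p_neq0 : p%:R != 0 :> algC by rewrite pnatr_eq0 -lt0n prime_gt0.
apply: (mulfI p_neq0); rewrite t_horner_f mulrBr [p%:R * (_ * tlog p t)]mulrCA L1 L2 qp; ring.
Qed.

Lemma tdvd_f_qnat m : tdvd (p - 1) f.[qnat m].
Proof.
have [r [X [Rr RX] tf]] := t_horner_f_qnat m.
exists ((\prod_(k < p) qnat (1 + p * k)) * r + (\prod_(1 <= i < p) qnat (p * i)) * X); split.
  apply: inZpzD; apply: inZpzM => //; apply/inZz_inZpz => //;
    by apply: inZz_prod => i _; apply: inZz_qnat.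
have tp : t ^+ p = t * t ^+ (p - 1) by rewrite -exprS subn1 prednK ?prime_gt0.
by apply: (mulfI t_neq0); rewrite tf one_sub_zp {1}natp_t tp; ring.
Qed.

Lemma inZpz_gamma : Rp gamma.
Proof.
rewrite /gammaz big_seq; apply: inZpz_sum => k; rewrite mem_index_iota => /andP[k_gt0 k_lt_p].
apply: inZpzM; first exact/inZpzX/inZz_inZpz/inZz_t.
by apply: inZpz_invn; rewrite k_lt_p (leq_trans _ k_gt0).
Qed.

Lemma gamma_not_tdvd1 : ~ tdvd 1 gamma.
Proof.
move=> t_dvd_gamma; apply: not_tdvd1_1.
have -> : 1 = gamma - \sum_(2 <= k < p) t ^+ k.-1 / k%:R.
  by rewrite /gammaz big_ltn ?prime_gt1 //= expr0 invr1 mulr1 addrK.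
apply: tdvdB => //; rewrite big_seq; apply: tdvd_sum => k.
rewrite mem_index_iota => /andP[k_ge2 k_lt_p].
exists (t ^+ k.-2 / k%:R); split.
  apply: inZpzM; first exact/inZpzX/inZz_inZpz/inZz_t.
  by apply: inZpz_invn; rewrite k_lt_p (leq_trans _ k_ge2).
by case: k k_ge2 {k_lt_p} => [|[|k]] // _; rewrite /= exprS expr1 mulrA.
Qed.

Lemma size_lead_coef_f : size f = p.+1 /\ lead_coef f = gamma.
Proof.
have gamma_neq0 : gamma != 0.
  by apply: contra_notN gamma_not_tdvd1 => /eqP ->; apply: tdvd0.
rewrite /fpoly; set L := \sum_(1 <= k < p) _.
have size_L : (size L <= p)%N.
  rewrite /L big_seq; apply: (big_ind (fun q : {poly algC} => (size q <= p)%N)).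
  - by rewrite size_poly0.
  - by move=> a b ha hb; rewrite (leq_trans (size_polyD _ _)) // geq_max ha hb.
  - move=> k; rewrite mem_index_iota => /andP[_ k_lt_p].
    by rewrite (leq_trans (size_scale_leq _ _)) // size_polyXn.
have size_gX : size (gamma *: 'X^p : {poly algC}) = p.+1.
  by rewrite size_scale // size_polyXn.
have lt_L : (size (- L) < size (gamma *: 'X^p : {poly algC}))%N by rewrite size_polyN size_gX.
by rewrite size_polyDl // lead_coefDl // size_gX lead_coefZ lead_coefXn mulr1.
Qed.

Definition gpoly d := 'X^(d %% p) * f ^+ (d %/ p).
Definition gval d := (d %/ p * (p - 1))%N.

Lemma size_gpoly d : (size (gpoly d) <= d.+1)%N.
Proof.
rewrite (leq_trans (size_polyMleq _ _)) // size_polyXn.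
have := size_poly_exp_leq f (d %/ p); rewrite (proj1 size_lead_coef_f) /= => size_fX.
rewrite (leq_trans (leq_add (leqnn _) size_fX)) //.
by rewrite addnS ltnS [X in (_ <= X)%N](divn_eq d p) addnC mulnC.
Qed.

Lemma coef_gpoly_diag d : (gpoly d)`_d = gamma ^+ (d %/ p).
Proof.
rewrite /gpoly coefXnM ltnNge leq_mod /=.
have -> : (d - d %% p = (size (f ^+ (d %/ p))).-1)%N.
  by rewrite size_exp (proj1 size_lead_coef_f) /= {1}(divn_eq d p) addnK mulnC.
by rewrite -lead_coefE lead_coef_exp (proj2 size_lead_coef_f).
Qed.

Lemma tdvd_gpoly_qnat d m : tdvd (gval d) (gpoly d).[qnat m].
Proof.
rewrite hornerM hornerXn horner_exp /gval mulnC; apply: tdvdMl.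
  exact/inZz_inZpz/inZzX/inZz_qnat.
exact/tdvdX/tdvd_f_qnat.
Qed.

Lemma xi_expansion m (j : 'I_n) : \sum_(k < n) qnat m ^+ k * xi p z k j = z ^+ (m * j).
Proof.
have -> : z ^+ (m * j) = (- (t * qnat m) + 1) ^+ j by rewrite t_qnat opprB subrK exprM.
rewrite exprD1n (big_ord_widen _ (fun i => (- (t * qnat m)) ^+ i *+ 'C(j, i)) (ltn_ord j)).
rewrite [RHS]big_mkcond /=; apply: eq_bigr => k _; case: ifP => k_lt_j.
  by rewrite /xi -[_ *+ 'C(j, k)]mulr_natr [in RHS]exprNn [in RHS]exprMn; ring.
by rewrite /xi bin_small ?mulr0 // ltnNge -ltnS k_lt_j.
Qed.

Definition moments (a : 'I_n -> algC) k := \sum_(m < n) a m * qnat m ^+ k.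

Lemma omega_xi (a : 'I_n -> algC) (j : 'I_n) :
  \sum_(k < n) moments a k * xi p z k j = omega p z a j.
Proof.
under eq_bigr => k _ do rewrite mulr_suml.
rewrite exchange_big /=; apply: eq_bigr => m _.
by rewrite -xi_expansion mulr_sumr; apply: eq_bigr => k _; ring.
Qed.

Lemma zX_inj i j : (i < n)%N -> (j < n)%N -> z ^+ i = z ^+ j -> i = j.
Proof.
by move=> i_lt_n j_lt_n /eqP; rewrite (eq_prim_root_expr z_prim) !modn_small // => /eqP.
Qed.

Lemma qnatB i j : (i <= j)%N -> qnat j - qnat i = z ^+ i * qnat (j - i).
Proof.
move=> le_ij; apply: (mulfI t_neq0).
by rewrite mulrBr mulrCA !t_qnat mulrBr mulr1 -exprD subnKC //; ring.
Qed.

Lemma qnat_inj i j : (i < n)%N -> (j < n)%N -> qnat i = qnat j -> i = j.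
Proof.
move=> i_lt_n j_lt_n /(congr1 (fun x => 1 - t * x)); rewrite !t_qnat !subKr.
exact: zX_inj.
Qed.

Definition Vqnat : 'M[algC]_n := \matrix_(k, m) qnat m ^+ k.

Lemma det_Vqnat : \det Vqnat = \prod_(i < n) \prod_(j < n | (i < j)%N) (qnat j - qnat i).
Proof.
have -> : Vqnat = Vandermonde n (\row_(m < n) qnat m) by apply/matrixP => k m; rewrite !mxE.
by rewrite det_Vandermonde; apply: eq_bigr => i _; apply: eq_bigr => j _; rewrite !mxE.
Qed.

Lemma det_Vqnat_neq0 : \det Vqnat != 0.
Proof.
rewrite det_Vqnat; apply/prodf_neq0 => i _; apply/prodf_neq0 => j lt_ij.
by rewrite subr_eq0; apply/eqP => /qnat_inj eq_ji; move: lt_ij; rewrite eq_ji ?ltnn.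
Qed.

Local Notation E := (\sum_(d < n) gval d)%N.

(* By [qnat_tval], [qnat j - qnat i] is a unit times [t ^+ (p - 1)] if [p] divides [j - i]
   and a unit otherwise; for fixed [j] the first case occurs [j %/ p] times. *)
Lemma det_Vqnat_tval : exists2 W, Zz_unit z W & \det Vqnat = t ^+ E * W.
Proof.
pose eps (i j : 'I_n) := ((p - 1) * (p %| j - i))%N.
exists (\prod_(j < n) \prod_(i < n | (i < j)%N) ((qnat j - qnat i) / t ^+ eps i j)).
  apply: Zz_unit_prod => j _; apply: Zz_unit_prod => i lt_ij.
  have [v v_unit qv] : exists2 v, Zz_unit z v & qnat (j - i) = t ^+ eps i j * v.
    by apply: qnat_tval; rewrite subn_gt0 lt_ij (leq_ltn_trans (leq_subr _ _)).
  rewrite (qnatB (ltnW lt_ij)) qv mulrCA mulrC mulKf ?expf_neq0 ?t_neq0 //.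
  exact: Zz_unitM (Zz_unit_zX _) v_unit.
rewrite det_Vqnat (exchange_big_dep xpredT) //= -prodrXr -big_split /=.
apply: eq_bigr => j _.
have -> : t ^+ gval j = \prod_(i < n | (i < j)%N) t ^+ eps i j.
  rewrite prodrXr /eps -big_distrr /= mulnC /gval; congr (t ^+ (_ * _)).
  rewrite -(big_ord_widen _ (fun i => nat_of_bool (p %| j - i)%N) (ltnW (ltn_ord j))).
  by rewrite sum_dvdn_subn ?prime_gt0.
rewrite -big_split /=; apply: eq_bigr => i _.
by rewrite mulrC divfK ?expf_neq0 ?t_neq0.
Qed.

Lemma det_Vqnat_dvd_pX : exists k, exists2 c, inZz z c & \det Vqnat * c = p%:R ^+ k.
Proof.
have [[W' RW' WW'] [W W_unit detV]] := (t_dvd_p, det_Vqnat_tval).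
case: W_unit => Wi RWi WWi.
exists E, (Wi * W' ^+ E); first exact: inZzM RWi (inZzX E RW').
rewrite detV; transitivity (W * Wi * (t ^+ E * W' ^+ E)); first by ring.
by rewrite WWi mul1r -exprMn WW'.
Qed.

Lemma inZpz_inZz x k : Rp x -> inZz z (p%:R ^+ k * x) -> inZz z x.
Proof.
case=> s [y [p_ndvd_s [Ry ->]]] Rpy.
have [a [b ab1]] := ndvdz_Bezout k p_ndvd_s.
have s_neq0 := ndvdz_intr_neq0 p_ndvd_s.
have -> : y / s%:~R = (a%:~R * s%:~R + b%:~R * p%:R ^+ k) * (y / s%:~R).
  by rewrite ab1 mul1r.
rewrite mulrDl -!mulrA [s%:~R * _]mulrC divfK //.
by apply: inZzD; apply: inZzM => //; apply: inZz_int.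
Qed.

Lemma tdvd_peval_moments a d : inGR p z a -> (d < n)%N ->
  tdvd (gval d) (peval n (gpoly d) (moments a)).
Proof.
move=> Ra d_lt_n; rewrite peval_moments; last exact: leq_trans (size_gpoly d) d_lt_n.
by apply: tdvd_sum => m _; apply: tdvdMl (tdvd_gpoly_qnat d m); apply: inZz_inZpz.
Qed.

Lemma omega_W2 a w : inGR p z a -> (forall j, omega p z a j = w j) -> W2 p z w.
Proof.
move=> Ra def_w; exists (moments a); split.
  by move=> k; apply: inZz_sum => m _; apply: inZzM (Ra m) _; apply/inZzX/inZz_qnat.
split=> [i j i_lt_p j_lt_p | j]; last by rewrite -def_w omega_xi.
have d_lt_n : (i + p * j < n)%N.
  by rewrite (@leq_trans (p + p * j)) ?ltn_add2r // -mulnS expnS expn1 leq_mul2l j_lt_p orbT.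
have [mod_d div_d] : ((i + p * j) %% p = i)%N /\ ((i + p * j) %/ p = j)%N.
  by rewrite mulnC addnC modnMDl divnMDl ?prime_gt0 // modn_small // divn_small // addn0.
by have := tdvd_peval_moments Ra d_lt_n; rewrite /gpoly /gval mod_d div_d.
Qed.

Definition gpoly_qnat_mx : 'M[algC]_n := \matrix_(d, k) ((gpoly d).[qnat k] / t ^+ gval d).

Lemma inZpz_gpoly_qnat_mx d k : Rp (gpoly_qnat_mx d k).
Proof.
rewrite mxE; have [y [Ry ->]] := tdvd_gpoly_qnat d k.
by rewrite mulrC mulKf ?expf_neq0 ?t_neq0.
Qed.

Lemma det_gpoly_qnat_mx :
  \det gpoly_qnat_mx * t ^+ E = \prod_(d < n) gamma ^+ (d %/ p) * \det Vqnat.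
Proof.
pose T : 'M[algC]_n := \matrix_(d, k) (gpoly d)`_k.
have -> : gpoly_qnat_mx = diag_mx (\row_(d < n) (t ^+ gval d)^-1) *m (T *m Vqnat).
  apply/matrixP => d k; rewrite mul_diag_mx !mxE.
  rewrite (horner_coef_wide _ (leq_trans (size_gpoly d) (ltn_ord d))) mulrC.
  by congr (_ * _); apply: eq_bigr => i _; rewrite !mxE.
rewrite !det_mulmx det_diag det_trig; last first.
  apply/is_trig_mxP => d k lt_dk; rewrite mxE nth_default //.
  exact: leq_trans (size_gpoly d) lt_dk.
have diagT : \prod_(d < n) T d d = \prod_(d < n) gamma ^+ (d %/ p).
  by apply: eq_bigr => d _; rewrite mxE coef_gpoly_diag.
have diagD : \prod_(d < n) (\row_(d < n) (t ^+ gval d)^-1) 0 d = (t ^+ E)^-1.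
  rewrite (eq_bigr (fun d : 'I_n => (t ^+ gval d)^-1)) => [|d _]; last by rewrite mxE.
  by rewrite prodfV prodrXr.
by rewrite diagT diagD mulrC mulVKf // expf_neq0 // t_neq0.
Qed.

(* Cramer's rule puts [\det gpoly_qnat_mx * a] in [Z_(p)[z]], so by [det_gpoly_qnat_mx]
   [t ^+ E] divides [G * (\det Vqnat * a)], where [G] is a product of powers of [gamma].
   Cancelling [G], which is prime to [t], and dividing by [t ^+ E] as in [det_Vqnat_tval]
   leaves a unit multiple of [a] in [Z_(p)[z]]. *)
Lemma inZpz_of_moments (a : 'cV[algC]_n) :
  (forall m, Rp (\det Vqnat * a m 0)) ->
  (forall d : 'I_n, tdvd (gval d) (\sum_(m < n) a m 0 * (gpoly d).[qnat m])) ->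
  forall m, Rp (a m 0).
Proof.
move=> RdetVa tdvd_a m.
have RGa d : Rp ((gpoly_qnat_mx *m a) d 0).
  have [y [Ry def_y]] := tdvd_a d; rewrite mxE.
  rewrite (eq_bigr (fun k => a k 0 * (gpoly d).[qnat k] / t ^+ gval d)) => [|k _].
    by rewrite -mulr_suml def_y mulrC mulKf ?expf_neq0 ?t_neq0.
  by rewrite mxE mulrC mulrA.
pose G := \prod_(d < n) gamma ^+ (d %/ p).
have RG : Rp G by apply: inZpz_prod => d _; apply/inZpzX/inZpz_gamma.
have G_ndvd : ~ tdvd 1 G by rewrite /G prodrXr; apply: not_tdvd1_X inZpz_gamma gamma_not_tdvd1.
have [y [Ry detVa]] : tdvd E (\det Vqnat * a m 0).
  apply: (tdvd_cancel RG G_ndvd (RdetVa m)).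
  exists (\det gpoly_qnat_mx * a m 0); split.
    exact: (rprop_det_mul_col inZpz_subring inZpz_gpoly_qnat_mx RGa m).
  by rewrite mulrA -det_gpoly_qnat_mx; ring.
have [W [W' RW' WW'] detV] := det_Vqnat_tval.
have Wa : W * a m 0 = y.
  by apply: (mulfI (expf_neq0 E t_neq0)); rewrite mulrA -detV detVa.
have -> : a m 0 = W' * y by rewrite -Wa mulrA [W' * W]mulrC WW' mul1r.
exact: inZpzM (inZz_inZpz RW') Ry.
Qed.

Lemma W2_omega_preimage w : W2 p z w -> exists a, inGR p z a /\ forall j, omega p z a j = w j.
Proof.
case=> zs [Rzs [tdvd_zs def_w]].
have Vqnat_unit : Vqnat \in unitmx by rewrite unitmxE unitfE det_Vqnat_neq0.
pose a := invmx Vqnat *m \col_k zs k.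
have zsE k : zs k = moments (fun m => a m 0) k.
  have := congr1 (fun B : 'cV_n => B k 0) (mulKVmx Vqnat_unit (\col_k zs k)).
  by rewrite /= !mxE => <-; apply: eq_bigr => m _; rewrite mxE mulrC.
have RdetVa m : inZz z (\det Vqnat * a m 0).
  apply: (rprop_det_mul_col (inZz_subring z)) => [k l | k].
    by rewrite mxE; apply/inZzX/inZz_qnat.
  by rewrite mulKVmx // mxE.
have Rpa : forall m, Rp (a m 0).
  apply: inZpz_of_moments => [m | d]; first exact/inZz_inZpz/RdetVa.
  have d_mod_lt : (d %% p < p)%N by rewrite ltn_pmod ?prime_gt0.
  have d_div_lt : (d %/ p < p)%N by rewrite ltn_divLR ?prime_gt0 // -expnSr ltn_ord.
  rewrite -peval_moments; last exact: leq_trans (size_gpoly d) (ltn_ord d).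
  have -> : peval n (gpoly d) (moments (fun m => a m 0)) = peval n (gpoly d) zs.
    by apply: eq_bigr => k _; rewrite zsE.
  exact: tdvd_zs.
exists (fun m => a m 0); split=> [m | j]; last first.
  by rewrite def_w -omega_xi; apply: eq_bigr => k _; rewrite zsE.
have [k [c Rc detVc]] := det_Vqnat_dvd_pX.
apply: (@inZpz_inZz _ k (Rpa m)); rewrite -detVc mulrAC.
exact: inZzM (RdetVa m) Rc.
Qed.

Lemma W1_W0 w : W1 p z w -> W0 p z w.
Proof.
case=> zs [Rzs def_w] j; rewrite def_w; apply: inZz_sum => k _; apply: inZzM (Rzs k) _.
apply: inZzM; last exact: inZz_nat.
by apply: inZzM; apply: inZzX; [apply/inZzN/inZz1 | apply: inZz_t].
Qed.

Lemma omegaD (a b : 'I_n -> algC) j :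
  omega p z (fun i => a i + b i) j = omega p z a j + omega p z b j.
Proof. by rewrite /omega -big_split; apply: eq_bigr => i _; rewrite mulrDl. Qed.

Lemma omegaM (a b : 'I_n -> algC) j :
  omega p z (grmul p a b) j = omega p z a j * omega p z b j.
Proof.
rewrite /omega /grmul mulr_suml.
under eq_bigr => k _ do rewrite mulr_suml.
rewrite exchange_big /=; apply: eq_bigr => i _.
rewrite mulr_sumr; under eq_bigr => k _ do rewrite mulr_suml.
rewrite (exchange_big_dep xpredT) //=; apply: eq_bigr => i' _.
have lt_mod_n : ((i + i') %% n < n)%N by rewrite ltn_pmod // (ltn_trans _ n_gt1).
rewrite (big_pred1 (Ordinal lt_mod_n)) => [|k]; last by rewrite /= eq_sym.
by rewrite /= exprM prim_expr_mod // -exprM mulnDl exprD; ring.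
Qed.

Lemma omega_inj (a b : 'I_n -> algC) :
  (forall j, omega p z a j = omega p z b j) -> forall i, a i = b i.
Proof.
move=> eq_ab i.
pose Vz : 'M[algC]_n := \matrix_(j, k) z ^+ (k * j).
have Vz_unit : Vz \in unitmx.
  have -> : Vz = Vandermonde n (\row_(k < n) z ^+ k).
    by apply/matrixP => j k; rewrite !mxE exprM.
  rewrite unitmxE unitfE det_Vandermonde; apply/prodf_neq0 => k _.
  apply/prodf_neq0 => l lt_kl; rewrite !mxE subr_eq0; apply/eqP => /zX_inj eq_lk.
  by move: lt_kl; rewrite eq_lk ?ltnn.
pose c : 'cV_n := \col_k (a k - b k).
have Vzc : Vz *m c = 0.
  apply/matrixP => j k; rewrite !mxE.
  transitivity (\sum_(l < n) (a l * z ^+ (l * j) - b l * z ^+ (l * j))).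
    by apply: eq_bigr => l _; rewrite !mxE; ring.
  by rewrite sumrB; apply/eqP; rewrite subr_eq0; apply/eqP; exact: eq_ab j.
have /matrixP/(_ i 0) : c = 0 by rewrite -(mulKmx Vz_unit c) Vzc mulmx0.
by rewrite !mxE => /eqP; rewrite subr_eq0 => /eqP.
Qed.

End CyclotomicPSquare.

Theorem proposition3p28 (p : nat) (z : algC) :
  prime p -> (p ^ 2).-primitive_root z ->
  [/\ (forall w, W2 p z w -> W1 p z w),
      (forall w, W1 p z w -> W0 p z w),
      (forall (a b : 'I_(p ^ 2) -> algC) (j : 'I_(p ^ 2)),
         omega p z (fun i => a i + b i) j = omega p z a j + omega p z b j),
      (forall (a b : 'I_(p ^ 2) -> algC) (j : 'I_(p ^ 2)),
         omega p z (grmul p a b) j = omega p z a j * omega p z b j)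
    & (forall a b, inGR p z a -> inGR p z b ->
         (forall j, omega p z a j = omega p z b j) -> forall i, a i = b i)] /\
  (forall w, W2 p z w <->
     exists a, inGR p z a /\ forall j, omega p z a j = w j).
Proof.
move=> p_pr z_prim; split; first split.
- by move=> w [zs [Rzs [_ def_w]]]; exists zs.
- by move=> w; apply: W1_W0.
- by move=> a b j; apply: omegaD.
- by move=> a b j; apply: (omegaM p_pr z_prim).
- by move=> a b _ _; apply: (omega_inj z_prim).
move=> w; split; first exact: (W2_omega_preimage p_pr z_prim).
by case=> a [Ra def_w]; apply: (omega_W2 p_pr z_prim Ra def_w).
Qed.
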